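(* Let $*$ be $\mathsf{BCI}$. Let $b$ be a belief state and $\alpha,\beta\in L$ such that $b\diamond\alpha$ is a belief state, $b\lhd\alpha$ is a belief state, $b(\beta)=1$, and $\alpha$ is $\beta$-trustworthy. Then $(b\lhd\alpha)(\beta)=1$.
   Context: $W$ is the finite set of worlds of a finite propositional language $L$; $\|\alpha\|$ the $\alpha$-worlds. A belief state is a probability distribution $b$ on $W$; $b(\beta)=\sum_{w\models\beta}b(w)$. A model is $M=\langle W,\varepsilon,T,E,O,\mathit{os}\rangle$ with events $\varepsilon$, $T:W\times\varepsilon\times W\to[0,1]$ with $\sum_{w'}T(w,e,w')=1$, event likelihood $E(e,w)\in[0,1]$, observation function $O:L\times W\to[0,1]$, ontic strength $\mathit{os}:L\times W\to[0,1]$. Update: $(b\diamond\alpha)(w')=\frac1\gamma O(\alpha,w')\sum_w\sum_e T(w,e,w')E(e,w)b(w)$, defined iff $\gamma>0$. Revision $\mathsf{BCI}$: with $d$ a distance on worlds ($d(w,w)<d(v,w)$ for $v\neq w$), $\mathit{Min}(\alpha,w,d)$ the set of $d$-closest $\alpha$-worlds to $w$, $(b\,\mathsf{GI}\,\alpha)(w)=0$ if $w\notin\|\alpha\|$, else $\sum_{w':w\in\mathit{Min}(\alpha,w',d)}b(w')/|\mathit{Min}(\alpha,w',d)|$; $(b\,\mathsf{OGI}\,\alpha)(w)=\frac{O(\alpha,w)(b\,\mathsf{GI}\,\alpha)(w)}{\sum_{w'}O(\alpha,w')(b\,\mathsf{GI}\,\alpha)(w')}$; $b\,\mathsf{BCI}\,\alpha$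 is Bayesian conditioning ($b(w)/b(\alpha)$ on $\alpha$-worlds, $0$ elsewhere) if $b(\alpha)>0$ and $b\,\mathsf{OGI}\,\alpha$ if $b(\alpha)=0$. Hybrid change: $(b\lhd\alpha)(w)=\frac1\gamma[(1-\mathit{os}(\alpha,w))(b\,\mathsf{BCI}\,\alpha)(w)+\mathit{os}(\alpha,w)(b\diamond\alpha)(w)]$ with $\gamma$ the normalizing sum; $b\lhd\alpha$ is a belief state iff both components are defined and $\gamma>0$. $\alpha$ is $\beta$-trustworthy iff $O(\alpha,w)=0$ for every $w\not\models\beta$. *)

From HB Require Import structures.
From mathcomp Require Import all_boot all_order all_algebra.
Set Implicit Arguments. Unset Strict Implicit. Unset Printing Implicit Defensive.
Import Order.TTheory GRing.Theory Num.Theory.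
Local Open Scope ring_scope.

Inductive pform (n : nat) : Type :=
  | FAtom of 'I_n
  | FTop
  | FBot
  | FNeg of pform n
  | FAnd of pform n & pform n
  | FOr of pform n & pform n
  | FImp of pform n & pform n.

Notation world n := {ffun 'I_n -> bool}.

Fixpoint sat (n : nat) (w : world n) (f : pform n) : bool :=
  match f with
  | FAtom i => w i
  | FTop => true
  | FBot => false
  | FNeg g => ~~ sat w g
  | FAnd g h => sat w g && sat w h
  | FOr g h => sat w g || sat w h
  | FImp g h => sat w g ==> sat w h
  end.

Section Defs.
Variables (R : realFieldType) (n : nat) (Ev : finType).
Local Notation W := (world n).
Local Notation L := (pform n).

Definition is_belief (b : W -> R) : Prop :=
  (forall w, 0 <= b w) /\ \sum_(w : W) b w = 1.

Definition prob (b : W -> R) (f : L) : R := \sum_(w : W | sat w f) b w.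

(* A model <W, eps, T, E, O, os>; eps is the finite type Ev. *)
Record model := Model {
  mT  : W -> Ev -> W -> R;
  mE  : Ev -> W -> R;
  mO  : L -> W -> R;
  mos : L -> W -> R }.

Definition is_model (M : model) : Prop :=
  [/\ (forall w e w', 0 <= mT M w e w' <= 1),
      (forall w e, \sum_(w' : W) mT M w e w' = 1),
      (forall e w, 0 <= mE M e w <= 1),
      (forall a w, 0 <= mO M a w <= 1) &
      (forall a w, 0 <= mos M a w <= 1)].

Definition upd_raw (M : model) (b : W -> R) (a : L) (w' : W) : R :=
  mO M a w' * \sum_(w : W) \sum_(e : Ev) mT M w e w' * mE M e w * b w.
Definition upd_gamma M b a : R := \sum_(w' : W) upd_raw M b a w'.
Definition upd_defined M b a : Prop := 0 < upd_gamma M b a.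
Definition update M b a (w' : W) : R := upd_raw M b a w' / upd_gamma M b a.

Definition is_dist (d : W -> W -> R) : Prop :=
  forall v w : W, v != w -> d w w < d v w.

Definition Min (a : L) (w : W) (d : W -> W -> R) : {set W} :=
  [set v : W | sat v a & [forall u : W, sat u a ==> (d v w <= d u w)]].

Definition GI (b : W -> R) (a : L) (d : W -> W -> R) (w : W) : R :=
  if sat w a then
    \sum_(w' : W | w \in Min a w' d) b w' / (#|Min a w' d|)%:R
  else 0.

Definition OGI_den M b a d : R := \sum_(w' : W) mO M a w' * GI b a d w'.
Definition OGI M b a d (w : W) : R := mO M a w * GI b a d w / OGI_den M b a d.

Definition BC (b : W -> R) (a : L) (w : W) : R :=
  if sat w a then b w / prob b a else 0.

Definition BCI M b a d (w : W) : R :=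
  if 0 < prob b a then BC b a w else OGI M b a d w.
Definition BCI_defined M b a d : Prop :=
  if 0 < prob b a then True else 0 < OGI_den M b a d.

Definition hyb_raw M b a d (w : W) : R :=
  (1 - mos M a w) * BCI M b a d w + mos M a w * update M b a w.
Definition hyb_gamma M b a d : R := \sum_(w : W) hyb_raw M b a d w.
Definition hybrid_defined M b a d : Prop :=
  [/\ BCI_defined M b a d, upd_defined M b a & 0 < hyb_gamma M b a d].
Definition hybrid M b a d (w : W) : R := hyb_raw M b a d w / hyb_gamma M b a d.

Definition trustworthy (M : model) (a bt : L) : Prop :=
  forall w : W, ~~ sat w bt -> mO M a w = 0.

End Defs.

From HB Require Import structures.
From mathcomp Require Import all_boot all_order all_algebra.
Import Order.TTheory GRing.Theory Num.Theory.
Local Open Scope ring_scope.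

(* Both components of the hybrid change vanish on a world outside [bt]: the
   update is weighted by the observation likelihood, which trustworthiness
   makes zero there, and BCI either conditions [b], which is zero there, or
   is again weighted by the observation likelihood.  Normalizing a function
   supported on [bt] then gives [bt] probability one. *)

Section HybridSupport.
Variables (R : realFieldType) (n : nat) (Ev : finType).
Implicit Types (b f : world n -> R) (a bt : pform n) (w : world n).

Lemma prob_eq1_outside_eq0 b bt :
  is_belief b -> prob b bt = 1 -> forall w, ~~ sat w bt -> b w = 0.
Proof.
move=> [b_ge0 b_sum1] pb1; apply/psumr_eq0P => [w _|]; first exact: b_ge0.
move: b_sum1; rewrite (bigID (fun w => sat w bt)) /= -/(prob b bt) pb1.
by move/eqP; rewrite -subr_eq0 addrC addrK => /eqP.
Qed.

Lemma prob_eq1_of_support f bt :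
  \sum_w f w = 1 -> (forall w, ~~ sat w bt -> f w = 0) -> prob f bt = 1.
Proof.
move=> f_sum1 f_supp; rewrite -f_sum1 (bigID (fun w => sat w bt)) /=.
by rewrite [X in _ + X]big1 ?addr0.
Qed.

Variables (M : model R n Ev) (d : world n -> world n -> R).

Lemma update_eq0 b a w : mO M a w = 0 -> update M b a w = 0.
Proof. by move=> O0; rewrite /update /upd_raw O0 !mul0r. Qed.

Lemma BCI_eq0 b a w : b w = 0 -> mO M a w = 0 -> BCI M b a d w = 0.
Proof.
move=> b0 O0; rewrite /BCI /BC /OGI O0 !mul0r.
by case: ifP => _ //; case: ifP => _ //; rewrite b0 mul0r.
Qed.

Lemma hybrid_eq0 b a w : b w = 0 -> mO M a w = 0 -> hybrid M b a d w = 0.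
Proof.
move=> b0 O0; rewrite /hybrid /hyb_raw BCI_eq0 // update_eq0 //.
by rewrite !mulr0 addr0 mul0r.
Qed.

Lemma sum_hybrid b a : 0 < hyb_gamma M b a d -> \sum_w hybrid M b a d w = 1.
Proof. by move=> g_gt0; rewrite -big_distrl /= divff // gt_eqF. Qed.

End HybridSupport.

Theorem mainTheorem20 (R : realFieldType) (n : nat) (Ev : finType)
    (M : model R n Ev) (d : world n -> world n -> R)
    (b : world n -> R) (a bt : pform n) :
  is_model M -> is_dist d -> is_belief b ->
  upd_defined M b a ->
  hybrid_defined M b a d ->
  prob b bt = 1 ->
  trustworthy M a bt ->
  prob (hybrid M b a d) bt = 1.
Proof.
move=> _ _ b_bel _ [_ _ g_gt0] pb1 trust.
apply: prob_eq1_of_support; first exact: sum_hybrid.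
move=> w w_out; apply: hybrid_eq0; last exact: trust.
exact: prob_eq1_outside_eq0 b_bel pb1 w w_out.
Qed.
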